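(* Let $\Gamma$ be a group and $\alpha\in\mathrm{End}(\Gamma)$, and let $(\lim\Gamma,\lim\alpha)$ be as in the context. Let $G_\alpha=K_\alpha\rtimes V$ be the fraction group of $(\Gamma,\alpha,\varepsilon_\Gamma)$ and $G_{\lim\alpha}=K_{\lim\alpha}\rtimes V$ that of $(\lim\Gamma,\lim\alpha,\varepsilon_{\lim\Gamma})$, where $\varepsilon$ denotes the trivial endomorphism. Let $\theta_0:\Gamma\to\lim\Gamma$, $g\mapsto[g,0]$, and for each tree $t$ let $\theta_t:\Gamma_t\to(\lim\Gamma)_t$ apply $\theta_0$ coordinatewise. Then the maps $\theta_t$ are compatible with the two directed systems and induce a group isomorphism $\theta:K_\alpha\to K_{\lim\alpha}$, which is $V$-equivariant for the two actions of $V$ and extends uniquely to a group isomorphism $G_\alpha\to G_{\lim\alpha}$.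
   Context: $\lim\Gamma$ is the inductive limit of $\Gamma_n=\{(g,n):g\in\Gamma\}$ ($n\ge0$) with maps $(g,n)\mapsto(\alpha^p(g),n+p)$; $[g,n]$ is the class of $(g,n)$; $\lim\alpha[g,n]=[\alpha(g),n]$ is an automorphism. Fraction groups: Cantor space $\mathfrak C=\{0,1\}^{\mathbf N}$, $C_w=\{w\cdot x\}$ for a word $w$; a tree $t$ is identified with its finite leaf set $L(t)$ of words with $\{C_w\}_{w\in L(t)}$ partitioning $\mathfrak C$; $s\ge t$ if each leaf of $s$ extends a leaf of $t$. $V$: homeomorphisms $v$ with $v(wx)=b(w)x$ for some trees $t,s$ and bijection $b:L(t)\to L(s)$. For a group $\Lambda$ and $\alpha_0,\alpha_1\in\mathrm{End}(\Lambda)$: $\Lambda_t=\Lambda^{L(t)}$, $\iota_{s,t}(g)(wu)=\alpha_{u_k}\circ\cdots\circ\alpha_{u_1}(g(w))$, $K=\varinjlim\Lambda_t$, $v$ sends the class of $g\in\Lambda_t$ to that of $g\circ b^{-1}\in\Lambda_s$, and the fraction group is $K\rtimes V$. *)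

From Stdlib Require Import ClassicalEpsilon.
From mathcomp Require Import all_boot.

Set Implicit Arguments.
Unset Strict Implicit.
Unset Printing Implicit Defensive.

Record group_ops := GroupOps {
  gcarrier :> Type;
  gmul : gcarrier -> gcarrier -> gcarrier;
  gone : gcarrier;
  ginv : gcarrier -> gcarrier }.
Arguments gone : clear implicits.

Definition is_group (G : group_ops) : Prop :=
  [/\ (forall x y z : G, gmul x (gmul y z) = gmul (gmul x y) z),
      (forall x : G, gmul (gone G) x = x) &
      (forall x : G, gmul (ginv x) x = gone G)].

Definition is_endo (G : group_ops) (f : G -> G) : Prop :=
  forall x y : G, f (gmul x y) = gmul (f x) (f y).

Definition triv_endo (G : group_ops) : G -> G := fun _ => gone G.
Arguments triv_endo : clear implicits.

Section Quot.
Variables (T : Type) (R : T -> T -> Prop).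
Definition quot := {P : T -> Prop | exists x, P = R x}.
Definition cls (x : T) : quot := exist _ (R x) (ex_intro _ x erefl).
Definition repr (q : quot) : T :=
  proj1_sig (constructive_indefinite_description _ (proj2_sig q)).
End Quot.
Arguments cls {T} R x.
Arguments repr {T} R q.

(* The inductive limit  lim Gamma  of  Gamma_n = {(g,n)} along
   (g,n) |-> (alpha^p g, n+p), and  lim alpha [g,n] = [alpha g, n].    *)
Section Lim.
Variables (G : group_ops) (a : G -> G).

Definition lim_rel (x y : G * nat) : Prop :=
  exists p q, x.2 + p = y.2 + q /\ iter p a x.1 = iter q a y.1.
Definition limT := quot lim_rel.
Definition lim_cls (g : G) (n : nat) : limT := cls lim_rel (g, n).
Definition lim_mul (u v : limT) : limT :=
  let: (g, n) := repr lim_rel u in let: (h, m) := repr lim_rel v in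
  lim_cls (gmul (iter m a g) (iter n a h)) (n + m).
Definition lim_one : limT := lim_cls (gone G) 0.
Definition lim_inv (u : limT) : limT :=
  let: (g, n) := repr lim_rel u in lim_cls (ginv g) n.
Definition lim_group : group_ops := GroupOps lim_mul lim_one lim_inv.
Definition lim_endo (u : lim_group) : lim_group :=
  let: (g, n) := repr lim_rel u in lim_cls (a g) n.
Definition theta0 (g : G) : lim_group := lim_cls g 0.
End Lim.
Arguments lim_endo {G} a u.
Arguments theta0 {G} a g.
Arguments lim_group {G} a.

Definition cantor := nat -> bool.
Definition word := seq bool.
Definition in_cyl (w : word) (x : cantor) : bool := w == mkseq x (size w).
Definition wcat (w : word) (x : cantor) : cantor :=
  fun n => if n < size w then nth false w n else x (n - size w).
(* a finite list of words is (the leaf set of) a tree iff the cylinders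
   C_w, w in L, partition the Cantor space *)
Definition is_tree (L : seq word) : Prop :=
  forall x : cantor, count (in_cyl^~ x) L = 1.
Definition tree := {L : seq word | is_tree L}.
Definition leaves (t : tree) : seq word := proj1_sig t.
Definition refines (s t : seq word) : Prop :=
  forall w, w \in s -> exists2 v, v \in t & prefix v w.

(* the complete tree of depth n (used as a common refinement) *)
Definition full (n : nat) : seq word := [seq val u | u <- enum {: n.-tuple bool}].

Lemma full_is_tree n : is_tree (full n).
Proof.
move=> x.
have Hmem w : (w \in full n) = (size w == n).
  apply/idP/idP.
    by case/mapP=> u _ ->; rewrite size_tuple.
  move=> Hw; apply/mapP; exists (@Tuple n bool w Hw) => //.
  by rewrite mem_enum.
have Hu : uniq (full n) by rewrite map_inj_uniq ?enum_uniq //; apply: val_inj.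
rewrite (@eq_in_count _ _ (pred1 (mkseq x n))).
  by have := count_uniq_mem (mkseq x n) Hu; rewrite Hmem size_mkseq eqxx.
by move=> w; rewrite Hmem => /eqP Hw; rewrite /in_cyl Hw.
Qed.

Definition full_tree (n : nat) : tree := exist _ (full n) (full_is_tree n).

Definition maxlen (L : seq word) : nat := foldr (fun w m => maxn (size w) m) 0 L.

(* Thompson's group V (as a predicate on self-maps of Cantor space).   *)
Definition V_rep (f : cantor -> cantor)
    (p : seq word * seq word * (word -> word)) : Prop :=
  let: (t, s, b) := p in
  [/\ is_tree t, is_tree s, perm_eq (map b t) s &
      forall w x, w \in t -> f (wcat w x) = wcat (b w) x].
Definition isV (f : cantor -> cantor) : Prop := exists p, V_rep f p.

Definition Vrep (f : cantor -> cantor) : seq word * seq word * (word -> word) :=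
  match excluded_middle_informative (isV f) with
  | left h => proj1_sig (constructive_indefinite_description _ h)
  | right _ => ([:: [::]], [:: [::]], id)
  end.

Section Frac.
Variables (G : group_ops) (a0 a1 : G -> G).

Definition alpha_word (u : word) (g : G) : G :=
  foldl (fun h (c : bool) => if c then a1 h else a0 h) g u.

Definition leaf_of (L : seq word) (w : word) : word :=
  nth [::] L (find (fun v : word => prefix v w) L).

(* iota_{s,t}(g)(v u) = alpha_{u_k} o ... o alpha_{u_1} (g v), evaluated at
   any leaf w = v u of a refinement s of t *)
Definition iota_tr (t : seq word) (g : word -> G) (w : word) : G :=
  let v := leaf_of t w in alpha_word (drop (size v) w) (g v).

(* representatives of K: an element g of Gamma_t = Gamma^{L(t)} *)
Definition Krep := (tree * (word -> G))%type.
Definition Krel (x y : Krep) : Prop :=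
  exists r, [/\ is_tree r, refines r (leaves x.1), refines r (leaves y.1) &
    forall w, w \in r -> iota_tr (leaves x.1) x.2 w = iota_tr (leaves y.1) y.2 w].
Definition K := quot Krel.
Definition Kcls (t : tree) (g : word -> G) : K := cls Krel (t, g).

Definition Kmul (k l : K) : K :=
  let: (t, g) := repr Krel k in let: (s, h) := repr Krel l in
  Kcls (full_tree (maxn (maxlen (leaves t)) (maxlen (leaves s))))
       (fun w => gmul (iota_tr (leaves t) g w) (iota_tr (leaves s) h w)).
Definition Kone : K := Kcls (full_tree 0) (fun _ => gone G).
Definition Kinv (k : K) : K :=
  let: (t, g) := repr Krel k in Kcls t (fun w => ginv (g w)).

(* action of v in V on K: the class of g in Gamma_t (refined so that t is
   the domain tree of v) goes to the class of g o b^{-1} in Gamma_s *)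
Definition actK (f : cantor -> cantor) (k : K) : K :=
  let: (t, s, b) := Vrep f in
  let: (t', g) := repr Krel k in
  Kcls (full_tree (maxlen s + maxlen (leaves t')))
    (fun w' => let v0 := nth [::] t (find (fun v => prefix (b v) w') t) in
               iota_tr (leaves t') g (v0 ++ drop (size (b v0)) w')).

(* semidirect product K rtimes V, carried by pairs (k, v) with v in V *)
Definition FracT := (K * (cantor -> cantor))%type.
Definition in_frac (x : FracT) : Prop := isV x.2.
Definition frac_mul (x y : FracT) : FracT := (Kmul x.1 (actK x.2 y.1), x.2 \o y.2).
End Frac.

Definition frac_iso (G1 : group_ops) (a b : G1 -> G1) (G2 : group_ops) (c d : G2 -> G2)
    (F : FracT a b -> FracT c d) : Prop :=
  [/\ forall x, in_frac x -> in_frac (F x),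
      forall x y, in_frac x -> in_frac y -> F x = F y -> x = y,
      forall y, in_frac y -> exists2 x, in_frac x & F x = y &
      forall x y, in_frac x -> in_frac y -> F (frac_mul x y) = frac_mul (F x) (F y)].

From Pilot Require Import Defs.
From Stdlib Require Import ClassicalEpsilon FunctionalExtensionality.
From Stdlib Require Import PropExtensionality ProofIrrelevance.
From mathcomp Require Import all_boot zify.

Set Implicit Arguments.
Unset Strict Implicit.
Unset Printing Implicit Defensive.

(** The class of [g : Gamma_t] in [K] only depends on the values of [iota_t g] on
   all sufficiently long words, and [theta0] commutes with every [alpha_u].
   Hence [theta] is well defined and is a homomorphism: products and the
   [V]-action are computed pointwise on a common full tree.  It is injective
   because [theta0 g = theta0 h] forces [alpha^p g = alpha^p h] for some [p], and
   a word of length [>= p] applied to [g] and [h] either meets the trivial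
   endomorphism or applies [alpha^p].  It is surjective because a letter [0]
   lowers the level of [[g, n]] by one while a letter [1] sends it to level [0],
   so on long words every element of [(lim Gamma)_t] takes values in the image
   of [theta0].  The extension to [K |x V] is [(k, v) |-> (theta k, v)], and it is
   unique since [(k, v) = (k, 1) (1, v)]. *)

Section Quotient.
Variables (T : Type) (R : T -> T -> Prop).
Hypotheses (R_refl : forall x, R x x) (R_sym : forall x y, R x y -> R y x)
  (R_trans : forall x y z, R x y -> R y z -> R x z).

Lemma cls_reprK (q : quot R) : cls R (Defs.repr R q) = q.
Proof.
case: q => P hP; rewrite /cls /Defs.repr /=.
case: (constructive_indefinite_description _ hP) => x /= EP; subst P.
by congr exist; apply: proof_irrelevance.
Qed.

Lemma cls_eqP x y : cls R x = cls R y <-> R x y.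
Proof.
split=> [/(f_equal (@proj1_sig _ _)) /= -> // | Rxy].
have Exy : R x = R y.
  apply: functional_extensionality => z; apply: propositional_extensionality.
  by split; [apply: R_trans; apply: R_sym | apply: R_trans].
rewrite /cls; move: (ex_intro _ x _) (ex_intro _ y _); rewrite Exy => p1 p2.
by congr exist; apply: proof_irrelevance.
Qed.

Lemma repr_clsR x : R x (Defs.repr R (cls R x)).
Proof. by apply/cls_eqP; rewrite cls_reprK. Qed.

Lemma cls_surj (q : quot R) : exists x, q = cls R x.
Proof. by exists (Defs.repr R q); rewrite cls_reprK. Qed.

End Quotient.

Lemma inj_surj_bijective (A B : Type) (f : A -> B) :
  injective f -> (forall b, exists a, f a = b) -> bijective f.
Proof.
move=> f_inj f_surj; pose g b := proj1_sig (constructive_indefinite_description _ (f_surj b)).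
have fgK : cancel g f by move=> b; rewrite /g; case: constructive_indefinite_description.
by exists g => // a; apply: f_inj; rewrite fgK.
Qed.

Section GroupFacts.
Variable G : group_ops.
Hypothesis G_group : is_group G.

Lemma mulgV (x : G) : gmul x (ginv x) = gone G.
Proof.
case: G_group => mulgA mul1g mulVg.
rewrite -[LHS]mul1g -[X in gmul X _](mulVg (ginv x)) -mulgA.
by rewrite [gmul (ginv x) _]mulgA mulVg mul1g mulVg.
Qed.

Lemma mulg1 (x : G) : gmul x (gone G) = x.
Proof.
case: G_group => mulgA mul1g mulVg.
by rewrite -(mulVg x) mulgA mulgV mul1g.
Qed.

Lemma endo1 (f : G -> G) : is_endo f -> f (gone G) = gone G.
Proof.
case: G_group => mulgA mul1g mulVg f_endo.
have f11 : gmul (f (gone G)) (f (gone G)) = f (gone G) by rewrite -f_endo mul1g.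
by rewrite -[LHS]mul1g -{1}(mulVg (f (gone G))) -mulgA f11 mulVg.
Qed.

Lemma endoV (f : G -> G) (x : G) : is_endo f -> f (ginv x) = ginv (f x).
Proof.
case: G_group => mulgA mul1g mulVg f_endo.
by rewrite -[LHS]mulg1 -(mulgV (f x)) mulgA -f_endo mulVg endo1.
Qed.

Lemma triv_endo_is_endo : is_endo (triv_endo G).
Proof. by case: G_group => _ mul1g _ x y; rewrite /triv_endo mul1g. Qed.

End GroupFacts.

Lemma iter_endo (G : group_ops) (f : G -> G) k : is_endo f -> is_endo (iter k f).
Proof. by move=> f_endo x y; elim: k => //= k ->; rewrite f_endo. Qed.

Lemma maxlen_ge (L : seq word) w : w \in L -> size w <= maxlen L.
Proof.
elim: L => //= v L IH; rewrite inE => /orP [/eqP -> | /IH]; first exact: leq_maxl.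
by move/leq_trans; apply; apply: leq_maxr.
Qed.

Lemma in_cyl_wcat (v w : word) (x : cantor) : prefix v w -> in_cyl v (wcat w x).
Proof.
case/prefixP=> u ->; rewrite /in_cyl; apply/eqP.
apply: (@eq_from_nth _ false); first by rewrite size_mkseq.
move=> i lt_iv; rewrite nth_mkseq // /wcat size_cat.
by rewrite ltn_addr // nth_cat lt_iv.
Qed.

Lemma drop_prefix (v x y : word) : prefix v x -> prefix x y ->
  drop (size v) y = drop (size v) x ++ drop (size x) y.
Proof.
case/prefixP=> u ->; case/prefixP=> u' ->.
by rewrite -[in LHS]catA !(drop_size_cat _ (erefl _)).
Qed.

Section Leaves.
Variable L : seq word.
Hypothesis L_tree : is_tree L.

Lemma leaf_exists w : maxlen L <= size w -> exists2 v, v \in L & prefix v w.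
Proof.
move=> Lw; set x := wcat w (fun _ => false).
have /hasP [v Lv /eqP vx] : has (in_cyl^~ x) L by rewrite has_count L_tree.
exists v => //; have le_vw : size v <= size w := leq_trans (maxlen_ge Lv) Lw.
rewrite prefixE; apply/eqP/(@eq_from_nth _ false) => [|i].
  by rewrite size_takel.
rewrite size_takel // => lt_iv.
by rewrite nth_take // vx nth_mkseq // /x /wcat (leq_trans lt_iv le_vw).
Qed.

Lemma leaf_uniq v1 v2 w : v1 \in L -> v2 \in L -> prefix v1 w -> prefix v2 w -> v1 = v2.
Proof.
move=> Lv1 Lv2 v1w v2w; set p := in_cyl^~ (wcat w (fun _ => false)).
have : v1 \in filter p L by rewrite mem_filter /p in_cyl_wcat.
have : v2 \in filter p L by rewrite mem_filter /p in_cyl_wcat.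
have : size (filter p L) = 1 by rewrite size_filter L_tree.
by case: (filter p L) => [|u [|]] //= _; rewrite !inE => /eqP -> /eqP ->.
Qed.

Lemma leaf_ofE v w : v \in L -> prefix v w -> leaf_of L w = v.
Proof.
move=> Lv vw; have hasL : has (fun u : word => prefix u w) L by apply/hasP; exists v.
by apply: (leaf_uniq _ Lv (nth_find [::] hasL) vw); rewrite mem_nth // -has_find.
Qed.

End Leaves.

Lemma mem_full n (w : word) : (w \in full n) = (size w == n).
Proof.
apply/mapP/idP => [[u _ ->] | sz_w]; first by rewrite size_tuple.
by exists (Tuple sz_w); rewrite ?mem_enum.
Qed.

Lemma full_refines (L : seq word) n : is_tree L -> maxlen L <= n -> refines (full n) L.
Proof.
by move=> L_tree Ln w; rewrite mem_full => /eqP sz_w; apply: leaf_exists; rewrite ?sz_w.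
Qed.

Definition eventually_eq (T : Type) (F1 F2 : word -> T) : Prop :=
  exists N, forall w, N <= size w -> F1 w = F2 w.

Lemma eventually_eq_refl (T : Type) (F : word -> T) : eventually_eq F F.
Proof. by exists 0. Qed.

Lemma eventually_eq_sym (T : Type) (F1 F2 : word -> T) :
  eventually_eq F1 F2 -> eventually_eq F2 F1.
Proof. by case=> N F12; exists N => w /F12. Qed.

Lemma eventually_eq_trans (T : Type) (F1 F2 F3 : word -> T) :
  eventually_eq F1 F2 -> eventually_eq F2 F3 -> eventually_eq F1 F3.
Proof.
case=> N1 F12 [N2 F23]; exists (maxn N1 N2) => w; rewrite geq_max => /andP [w1 w2].
by rewrite F12 ?F23.
Qed.

Lemma eventually_in_seq (T : eqType) (P : nat -> T -> Prop) (s : seq T) :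
  (forall x, x \in s -> exists n, forall m, n <= m -> P m x) ->
  exists n, forall m, n <= m -> forall x, x \in s -> P m x.
Proof.
elim: s => [_ | y s IH Ps]; first by exists 0.
have [n Py] := Ps y (mem_head _ _).
have [n' Ps'] : exists n', forall m, n' <= m -> forall x, x \in s -> P m x.
  by apply: IH => x sx; apply: Ps; rewrite inE sx orbT.
exists (maxn n n') => m; rewrite geq_max => /andP [nm n'm] x.
by rewrite inE => /orP [/eqP -> | /Ps']; [apply: Py | apply].
Qed.

Lemma Vrep_spec f : let: (t, s, b) := Vrep f in is_tree s /\ perm_eq (map b t) s.
Proof.
rewrite /Vrep; case: excluded_middle_informative => [fV | _]; last by split.
by case: (constructive_indefinite_description _ fV) => [[[t s] b] []].
Qed.

Definition Vpick (t : seq word) (b : word -> word) (w : word) : word :=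
  nth [::] t (find (fun v => prefix (b v) w) t).

(* the inverse of the element of [V] given by [b : t -> s]: it sends [b v ++ u] to [v ++ u] *)
Definition Vinv (t : seq word) (b : word -> word) (w : word) : word :=
  Vpick t b w ++ drop (size (b (Vpick t b w))) w.

Lemma isV_id : isV id.
Proof. by exists ([:: [::]], [:: [::]], id); split. Qed.

Section VWords.
Variables (t s : seq word) (b : word -> word).
Hypotheses (s_tree : is_tree s) (bts : perm_eq (map b t) s).

Lemma VpickP w : maxlen s <= size w ->
  [/\ Vpick t b w \in t, b (Vpick t b w) \in s & prefix (b (Vpick t b w)) w].
Proof.
move=> sw; have [u su uw] := leaf_exists s_tree sw.
have /mapP [v tv buv] : u \in map b t by rewrite (perm_mem bts).
have hast : has (fun v => prefix (b v) w) t by apply/hasP; exists v; rewrite -?buv.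
split; last exact: (nth_find [::] hast).
  by rewrite mem_nth // -has_find.
by rewrite -(perm_mem bts) map_f // mem_nth // -has_find.
Qed.

Lemma Vpick_cat w u : maxlen s <= size w -> Vpick t b (w ++ u) = Vpick t b w.
Proof.
move=> sw; have [_ s_bv bv_w] := VpickP sw.
rewrite /Vpick (@eq_in_find _ _ (fun v => prefix (b v) w)) // => v tv /=.
apply/idP/idP => [bv_wu | /prefix_trans]; last by apply; apply: prefix_prefix.
have s_bv' : b v \in s by rewrite -(perm_mem bts) map_f.
by rewrite (leaf_uniq s_tree s_bv' s_bv bv_wu (prefix_trans bv_w (prefix_prefix _ _))).
Qed.

Lemma Vinv_cat w u : maxlen s <= size w -> Vinv t b (w ++ u) = Vinv t b w ++ u.
Proof.
move=> sw; have [_ s_bv _] := VpickP sw.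
rewrite /Vinv Vpick_cat // drop_cat ltn_neqAle (leq_trans (maxlen_ge s_bv) sw) andbT.
case: eqP => [-> | _] /=; last by rewrite catA.
by rewrite subnn drop0 drop_size cats0.
Qed.

Lemma size_Vinv w : maxlen s <= size w -> size w - maxlen s <= size (Vinv t b w).
Proof.
move=> sw; have [_ s_bv _] := VpickP sw; have bv_s := maxlen_ge s_bv.
by rewrite /Vinv size_cat size_drop (leq_trans (leq_sub2l _ bv_s)) ?leq_addl.
Qed.

End VWords.

Section FractionGroup.
Variables (G : group_ops) (a0 a1 : G -> G).
Local Notation aw := (alpha_word a0 a1).
Local Notation iota := (iota_tr a0 a1).
Local Notation Kcls := (Kcls a0 a1).
Local Notation Krel := (Krel a0 a1).

Lemma alpha_word_cat u1 u2 x : aw (u1 ++ u2) x = aw u2 (aw u1 x).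
Proof. exact: foldl_cat. Qed.

Lemma iota_leaf (L : seq word) g v w : is_tree L -> v \in L -> prefix v w ->
  iota L g w = aw (drop (size v) w) (g v).
Proof. by move=> L_tree Lv vw; rewrite /iota_tr (leaf_ofE L_tree Lv vw). Qed.

Lemma iota_prefix (L : seq word) g v x y : is_tree L -> v \in L -> prefix v x ->
  prefix x y -> iota L g y = aw (drop (size x) y) (iota L g x).
Proof.
move=> L_tree Lv vx xy; rewrite !(iota_leaf g L_tree Lv) ?(prefix_trans vx xy) //.
by rewrite (drop_prefix vx xy) alpha_word_cat.
Qed.

Lemma iota_long_prefix (L : seq word) g x y : is_tree L -> maxlen L <= size x ->
  prefix x y -> iota L g y = aw (drop (size x) y) (iota L g x).
Proof. by move=> L_tree /(leaf_exists L_tree) [v Lv vx]; apply: iota_prefix Lv vx. Qed.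

Lemma iota_take (L : seq word) g n w : is_tree L -> maxlen L <= n -> n <= size w ->
  iota L g w = aw (drop n w) (iota L g (take n w)).
Proof.
move=> L_tree Ln nw; rewrite -{1}(size_takel nw).
by apply: iota_long_prefix; rewrite ?prefix_take ?size_takel.
Qed.

Lemma iota_full n F w : n <= size w -> iota (full n) F w = aw (drop n w) (F (take n w)).
Proof.
move=> nw; have full_w : take n w \in full n by rewrite mem_full size_takel.
by rewrite (iota_leaf F (full_is_tree n) full_w (prefix_take _ _)) size_takel.
Qed.

Lemma alpha_word_iter_eq : (forall y z, a1 y = a1 z) ->
  forall u p y z, p <= size u -> iter p a0 y = iter p a0 z -> aw u y = aw u z.
Proof.
move=> a1_const; elim=> [|c u IH] [|p] y z //= pu yz; first by rewrite yz.
case: c; first by rewrite (a1_const y z).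
by apply: (IH p) => //; rewrite -!iterSr.
Qed.

Lemma KrelP x y : Krel x y <-> eventually_eq (iota (leaves x.1) x.2) (iota (leaves y.1) y.2).
Proof.
have x_tree : is_tree (leaves x.1) := proj2_sig x.1.
have y_tree : is_tree (leaves y.1) := proj2_sig y.1.
split=> [[r [r_tree rx ry xy_r]] | [N xy]].
  exists (maxlen r) => w rw; have [u ru uw] := leaf_exists r_tree rw.
  have [[v1 xv1 v1u] [v2 yv2 v2u]] := (rx u ru, ry u ru).
  by rewrite (iota_prefix _ x_tree xv1 v1u uw) (iota_prefix _ y_tree yv2 v2u uw) xy_r.
set M := maxn N (maxn (maxlen (leaves x.1)) (maxlen (leaves y.1))).
exists (full M); split; first exact: full_is_tree.
- by apply: full_refines => //; rewrite /M; lia.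
- by apply: full_refines => //; rewrite /M; lia.
- by move=> w; rewrite mem_full => /eqP Mw; apply: xy; rewrite Mw /M; lia.
Qed.

Lemma Krel_refl x : Krel x x.
Proof. exact/KrelP/eventually_eq_refl. Qed.

Lemma Krel_sym x y : Krel x y -> Krel y x.
Proof. by move/KrelP/eventually_eq_sym/KrelP. Qed.

Lemma Krel_trans x y z : Krel x y -> Krel y z -> Krel x z.
Proof. by move=> /KrelP xy /KrelP yz; apply/KrelP/(eventually_eq_trans xy yz). Qed.

Lemma Kcls_eqP t g s h :
  Kcls t g = Kcls s h <-> eventually_eq (iota (leaves t) g) (iota (leaves s) h).
Proof.
exact: iff_trans (cls_eqP Krel_refl Krel_sym Krel_trans _ _) (KrelP (t, g) (s, h)).
Qed.

Lemma Kcls_repr t g : let x := Defs.repr Krel (Kcls t g) in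
  eventually_eq (iota (leaves t) g) (iota (leaves x.1) x.2).
Proof. exact: (KrelP (t, g) _).1 (repr_clsR Krel_refl Krel_sym Krel_trans (t, g)). Qed.

Lemma Kcls_surj (k : K a0 a1) : exists t g, k = Kcls t g.
Proof. by have [[t g] ->] := cls_surj k; exists t, g. Qed.

Lemma Kcls_full (t : tree) g n : maxlen (leaves t) <= n ->
  Kcls (full_tree n) (iota (leaves t) g) = Kcls t g.
Proof.
move=> tn; apply/Kcls_eqP; exists n => w nw /=.
by rewrite iota_full // -iota_take //; apply: proj2_sig.
Qed.

Lemma iota_full_Vinv t s b (L : tree) g n w : is_tree s -> perm_eq (map b t) s ->
  maxlen s + maxlen (leaves L) <= n -> n <= size w ->
  iota (full n) (fun v => iota (leaves L) g (Vinv t b v)) w =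
  iota (leaves L) g (Vinv t b w).
Proof.
move=> s_tree bts Ln nw; have sn : maxlen s <= size (take n w) by rewrite size_takel //; lia.
have := size_Vinv s_tree bts sn; rewrite size_takel // => Vinv_n.
rewrite iota_full // -[in RHS](cat_take_drop n w) (Vinv_cat s_tree bts _ sn).
rewrite [in RHS](iota_long_prefix g (proj2_sig L) _ (prefix_prefix _ _)).
  by rewrite (drop_size_cat _ (erefl _)).
by apply: leq_trans Vinv_n; rewrite leq_subRL // (leq_trans (leq_addr _ _) Ln).
Qed.

Lemma actKE f t s b (L : tree) g : Vrep f = (t, s, b) ->
  actK f (Kcls L g) = Kcls (full_tree (maxlen s + maxlen (leaves L)))
                           (fun w => iota (leaves L) g (Vinv t b w)).
Proof.
move=> fE; have := Vrep_spec f; rewrite fE => -[s_tree bts].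
rewrite /actK fE; have [N Lg] := Kcls_repr L g.
move: N Lg; case: (Defs.repr _ _) => L' g' /= N Lg.
apply/Kcls_eqP; exists (N + maxlen s + maxlen (leaves L) + maxlen (leaves L')) => w Nw /=.
have sw : maxlen s <= size w by lia.
have := size_Vinv s_tree bts sw => Vinv_w.
rewrite (@iota_full_Vinv t s b L g _ w) ?(@iota_full_Vinv t s b L' g' _ w) //; try lia.
by rewrite Lg //; lia.
Qed.

Section Endomorphisms.
Hypotheses (a0_endo : is_endo a0) (a1_endo : is_endo a1).

Lemma alpha_word_endo u : is_endo (aw u).
Proof. by elim: u => [|c u IH] x y //=; case: c; rewrite ?a0_endo ?a1_endo IH. Qed.

Lemma iota_full_mul (t s : tree) g h n w :
  maxlen (leaves t) <= n -> maxlen (leaves s) <= n -> n <= size w ->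
  iota (full n) (fun v => gmul (iota (leaves t) g v) (iota (leaves s) h v)) w =
  gmul (iota (leaves t) g w) (iota (leaves s) h w).
Proof.
move=> tn sn nw; rewrite iota_full // alpha_word_endo.
by rewrite -!iota_take //; apply: proj2_sig.
Qed.

Lemma KmulE t g s h :
  Kmul (Kcls t g) (Kcls s h) =
  Kcls (full_tree (maxn (maxlen (leaves t)) (maxlen (leaves s))))
    (fun w => gmul (iota (leaves t) g w) (iota (leaves s) h w)).
Proof.
rewrite /Kmul; have [N1 tg] := Kcls_repr t g; have [N2 sh] := Kcls_repr s h.
move: N1 N2 tg sh; case: (Defs.repr _ (Kcls t g)) => t' g'.
case: (Defs.repr _ (Kcls s h)) => s' h' /= N1 N2 tg sh.
apply/Kcls_eqP; exists (N1 + N2 + maxlen (leaves t) + maxlen (leaves s)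
                        + maxlen (leaves t') + maxlen (leaves s')) => w Nw /=.
by rewrite !iota_full_mul ?tg ?sh //; lia.
Qed.

Hypothesis G_group : is_group G.

Lemma iota_one (L : seq word) w : iota L (fun _ => gone G) w = gone G.
Proof. exact: endo1 (alpha_word_endo _). Qed.

Lemma Kcls_one (t : tree) : Kcls t (fun _ => gone G) = Kone a0 a1.
Proof. by apply/Kcls_eqP; exists 0 => w _; rewrite !iota_one. Qed.

Lemma actK_one f : actK f (Kone a0 a1) = Kone a0 a1.
Proof.
case fE: (Vrep f) => [[t s] b]; rewrite {1}/Kone (actKE _ _ fE).
apply: etrans (Kcls_one (full_tree _)).
by congr Kcls; apply: functional_extensionality => w; rewrite iota_one.
Qed.

Lemma Kmul1 k : Kmul k (Kone a0 a1) = k.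
Proof.
have [t [g ->]] := Kcls_surj k; rewrite /Kone KmulE.
apply: etrans (Kcls_full g (leq_maxl _ _)).
by congr Kcls; apply: functional_extensionality => w; rewrite iota_one mulg1.
Qed.

Lemma frac_mul_decomp k f : (k, f) = frac_mul (k, id) (Kone a0 a1, f).
Proof. by rewrite /frac_mul /= actK_one Kmul1. Qed.

End Endomorphisms.
End FractionGroup.

Section FractionGroupMaps.
Variables (G1 : group_ops) (a0 a1 : G1 -> G1) (G2 : group_ops) (b0 b1 : G2 -> G2).

Lemma frac_iso_pair (theta : K a0 a1 -> K b0 b1) : bijective theta ->
  (forall k l, theta (Kmul k l) = Kmul (theta k) (theta l)) ->
  (forall f k, theta (actK f k) = actK f (theta k)) ->
  frac_iso (fun x : FracT a0 a1 => (theta x.1, x.2) : FracT b0 b1).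
Proof.
case=> theta' thetaK theta'K theta_mul theta_act; split=> //.
- by move=> [k1 f1] [k2 f2] _ _ [/(can_inj thetaK) -> ->].
- by move=> [k f] fV; exists (theta' k, f) => //=; rewrite theta'K.
- by move=> [k1 f1] [k2 f2] _ _; rewrite /frac_mul /= theta_mul theta_act.
Qed.

Lemma frac_iso_unique (Phi Psi : FracT a0 a1 -> FracT b0 b1) :
  is_group G1 -> is_endo a0 -> is_endo a1 -> frac_iso Phi -> frac_iso Psi ->
  (forall k, Phi (k, id) = Psi (k, id)) ->
  (forall f, isV f -> Phi (Kone a0 a1, f) = Psi (Kone a0 a1, f)) ->
  forall x, in_frac x -> Phi x = Psi x.
Proof.
move=> G1_group a0_endo a1_endo [_ _ _ Phi_mul] [_ _ _ Psi_mul] PhiK PhiV [k f] fV.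
rewrite (frac_mul_decomp a0_endo a1_endo G1_group k f).
by rewrite Phi_mul ?Psi_mul ?PhiK ?PhiV //; apply: isV_id.
Qed.

End FractionGroupMaps.

Section InductiveLimit.
Variables (Gam : group_ops) (alpha : Gam -> Gam).
Hypotheses (Gam_group : is_group Gam) (alpha_endo : is_endo alpha).
Local Notation R := (lim_rel alpha).
Local Notation lim_cls := (lim_cls alpha).
Local Notation theta0 := (theta0 alpha).

Lemma lim_rel_refl x : R x x.
Proof. by exists 0, 0. Qed.

Lemma lim_rel_sym x y : R x y -> R y x.
Proof. by case=> p [q [E1 E2]]; exists q, p. Qed.

Lemma lim_rel_trans x y z : R x y -> R y z -> R x z.
Proof.
case=> p1 [q1 [E1 F1]] [p2 [q2 [E2 F2]]]; exists (p2 + p1), (q1 + q2); split; first lia.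
by rewrite iterD F1 -!iterD addnC iterD F2 -iterD.
Qed.

Lemma lim_cls_eq g n h m : R (g, n) (h, m) -> lim_cls g n = lim_cls h m.
Proof. exact: (cls_eqP lim_rel_refl lim_rel_sym lim_rel_trans _ _).2. Qed.

Lemma lim_cls_iter g n p : lim_cls (iter p alpha g) (n + p) = lim_cls g n.
Proof. by apply: lim_cls_eq; exists 0, p; rewrite addn0. Qed.

Lemma lim_cls_surj (u : lim_group alpha) : exists g n, u = lim_cls g n.
Proof. by have [[g n] ->] := cls_surj u; exists g, n. Qed.

Lemma lim_repr g n : R (g, n) (Defs.repr R (lim_cls g n)).
Proof. exact: repr_clsR lim_rel_refl lim_rel_sym lim_rel_trans _. Qed.

Lemma theta0_eq g h : theta0 g = theta0 h ->
  exists p, forall q, p <= q -> iter q alpha g = iter q alpha h.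
Proof.
move/(cls_eqP lim_rel_refl lim_rel_sym lim_rel_trans) => [p [q [/= pq gh]]].
by move: pq gh; rewrite !add0n => <- gh; exists p => r pr; rewrite -(subnK pr) !iterD gh.
Qed.

Lemma lim_endoE g n : lim_endo alpha (lim_cls g n) = lim_cls (alpha g) n.
Proof.
rewrite /lim_endo; case: (Defs.repr _ _) (lim_repr g n) => g' n' [p [q [/= E F]]].
apply: lim_cls_eq; exists q, p; split => /=; first lia.
by rewrite -iterSr iterS -F -iterS iterSr.
Qed.

Lemma lim_mulE g n h m : lim_mul (lim_cls g n) (lim_cls h m) =
  lim_cls (gmul (iter m alpha g) (iter n alpha h)) (n + m).
Proof.
rewrite /lim_mul.
case: (Defs.repr _ (lim_cls g n)) (lim_repr g n) => g' n' [p1 [q1 [/= E1 F1]]].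
case: (Defs.repr _ (lim_cls h m)) (lim_repr h m) => h' m' [p2 [q2 [/= E2 F2]]].
apply: lim_cls_eq; exists (q1 + q2), (p1 + p2); split => /=; first lia.
rewrite !(iter_endo _ alpha_endo) -!iterD; congr gmul.
  rewrite (_ : q1 + q2 + m' = q2 + m' + q1); last lia.
  by rewrite [LHS]iterD -F1 -iterD; congr iter; lia.
rewrite (_ : q1 + q2 + n' = q1 + n' + q2); last lia.
by rewrite [LHS]iterD -F2 -iterD; congr iter; lia.
Qed.

Lemma lim_invE g n : lim_inv (lim_cls g n) = lim_cls (ginv g) n.
Proof.
rewrite /lim_inv; case: (Defs.repr _ _) (lim_repr g n) => g' n' [p [q [/= E F]]].
apply: lim_cls_eq; exists q, p; split => /=; first lia.
by rewrite !(endoV Gam_group _ (iter_endo _ alpha_endo)) F.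
Qed.

Lemma lim_cls1 n : lim_cls (gone Gam) n = gone (lim_group alpha).
Proof.
by rewrite /= /lim_one -(lim_cls_iter _ 0 n) (endo1 Gam_group (iter_endo n alpha_endo)).
Qed.

Lemma lim_group_is_group : is_group (lim_group alpha).
Proof.
case: Gam_group => mulgA mul1g mulVg; split.
- move=> u v w; have [g [n ->]] := lim_cls_surj u; have [h [m ->]] := lim_cls_surj v.
  have [k [l ->]] := lim_cls_surj w; rewrite /gmul /= !lim_mulE addnA.
  by rewrite !(iter_endo _ alpha_endo) -!iterD mulgA [m + l]addnC [n + l]addnC.
- move=> u; have [g [n ->]] := lim_cls_surj u.
  by rewrite /gmul /= /lim_one lim_mulE (endo1 Gam_group (iter_endo n alpha_endo)) mul1g.
- move=> u; have [g [n ->]] := lim_cls_surj u.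
  rewrite /gmul /ginv /= lim_invE lim_mulE -(iter_endo _ alpha_endo) mulVg.
  by rewrite (endo1 Gam_group (iter_endo n alpha_endo)) lim_cls1.
Qed.

Lemma lim_endo_is_endo : is_endo (lim_endo alpha).
Proof.
move=> u v; have [g [n ->]] := lim_cls_surj u; have [h [m ->]] := lim_cls_surj v.
by rewrite /gmul /= lim_mulE !lim_endoE lim_mulE alpha_endo -!iterSr !iterS.
Qed.

Lemma theta0_mul g h : theta0 (gmul g h) = gmul (theta0 g) (theta0 h).
Proof. by rewrite /gmul /= lim_mulE. Qed.

Lemma alpha_word_lim_cls u g n : n <= size u ->
  exists y,
    alpha_word (lim_endo alpha) (triv_endo (lim_group alpha)) u (lim_cls g n) = theta0 y.
Proof.
elim: u g n => [|[] u IH] g n /=; first by rewrite leqn0 => /eqP ->; exists g.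
  by move=> _; apply: IH.
rewrite lim_endoE; case: n => [|n] nu; first exact: IH.
by rewrite -addn1 (lim_cls_iter g n 1); apply: IH.
Qed.

End InductiveLimit.

Section Theta.
Variables (Gam : group_ops) (alpha : Gam -> Gam).
Hypotheses (Gam_group : is_group Gam) (alpha_endo : is_endo alpha).
Local Notation LG := (lim_group alpha).
Local Notation theta0 := (theta0 alpha).
Local Notation iotaA := (iota_tr alpha (triv_endo Gam)).
Local Notation iotaL := (iota_tr (lim_endo alpha) (triv_endo LG)).
Local Notation KclsA := (Kcls alpha (triv_endo Gam)).
Local Notation KclsL := (Kcls (lim_endo alpha) (triv_endo LG)).

Lemma theta0_alpha_word u x :
  theta0 (alpha_word alpha (triv_endo Gam) u x) =
  alpha_word (lim_endo alpha) (triv_endo LG) u (theta0 x).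
Proof. by elim: u x => //= -[] u IH x; rewrite IH // /theta0 lim_endoE. Qed.

Lemma theta0_iota (L : seq word) g w :
  theta0 (iotaA L g w) = iotaL L (fun v => theta0 (g v)) w.
Proof. exact: theta0_alpha_word. Qed.

Definition theta (k : K alpha (triv_endo Gam)) : K (lim_endo alpha) (triv_endo LG) :=
  let x := Defs.repr (Krel alpha (triv_endo Gam)) k in
  KclsL x.1 (fun v => theta0 (x.2 v)).

Lemma theta_cls t g : theta (KclsA t g) = KclsL t (fun v => theta0 (g v)).
Proof.
rewrite /theta; have [N tg] := Kcls_repr alpha (triv_endo Gam) t g.
move: N tg; case: (Defs.repr _ _) => t' g' /= N tg.
by apply/Kcls_eqP; exists N => w Nw; rewrite -!theta0_iota tg.
Qed.

Lemma theta_one :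
  theta (Kone alpha (triv_endo Gam)) = Kone (lim_endo alpha) (triv_endo LG).
Proof. by rewrite /Kone theta_cls. Qed.

Lemma theta_inj : injective theta.
Proof.
move=> k1 k2; have [t1 [g1 ->]] := Kcls_surj k1; have [t2 [g2 ->]] := Kcls_surj k2.
rewrite !theta_cls => /Kcls_eqP [N image_eq].
have t1_tree : is_tree (leaves t1) := proj2_sig t1.
have t2_tree : is_tree (leaves t2) := proj2_sig t2.
set M := maxn N (maxn (maxlen (leaves t1)) (maxlen (leaves t2))).
have [P iterP] : exists P, forall q, P <= q -> forall v, v \in full M ->
    iter q alpha (iotaA (leaves t1) g1 v) = iter q alpha (iotaA (leaves t2) g2 v).
  apply: eventually_in_seq => v; rewrite mem_full => /eqP Mv.
  by apply: theta0_eq; rewrite !theta0_iota image_eq // Mv /M; lia.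
apply/Kcls_eqP; exists (M + P) => w MPw.
rewrite (@iota_take _ _ _ _ g1 M w t1_tree) ?(@iota_take _ _ _ _ g2 M w t2_tree);
  try (rewrite /M; lia).
apply: (@alpha_word_iter_eq _ alpha (triv_endo Gam) (fun _ _ => erefl) _ P).
  by rewrite size_drop; lia.
by apply: iterP; rewrite // mem_full size_takel //; lia.
Qed.

Lemma theta_surj k' : exists k, theta k = k'.
Proof.
have [t [h ->]] := Kcls_surj k'; have t_tree : is_tree (leaves t) := proj2_sig t.
have [N hN] : exists N, forall n, N <= n -> forall v, v \in leaves t ->
    forall u, n <= size u ->
    exists y, alpha_word (lim_endo alpha) (triv_endo LG) u (h v) = theta0 y.
  apply: eventually_in_seq => v _; have [g [n ->]] := lim_cls_surj (h v).
  by exists n => m nm u mu; apply: alpha_word_lim_cls; lia.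
set M := maxlen (leaves t) + N.
have ex_y x : exists y, M <= size x -> theta0 y = iotaL (leaves t) h x.
  case: (leqP M (size x)) => Mx; last by exists (gone Gam).
  have [v tv vx] := leaf_exists t_tree (leq_trans (leq_addr N _) Mx).
  have [|y yE] := hN N (leqnn N) v tv (drop (size v) x).
    by have := maxlen_ge tv; rewrite size_drop; lia.
  by exists y; rewrite (iota_leaf _ _ h t_tree tv vx) yE.
pose F x := proj1_sig (constructive_indefinite_description _ (ex_y x)).
exists (KclsA (full_tree M) F); rewrite theta_cls; apply/Kcls_eqP; exists M => w Mw /=.
rewrite iota_full // (@iota_take _ _ _ _ h M w t_tree) ?leq_addr //.
by rewrite /F; case: constructive_indefinite_description => y /= ->; rewrite ?size_takel.
Qed.

Lemma theta_bij : bijective theta.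
Proof. exact: inj_surj_bijective theta_inj theta_surj. Qed.

Lemma theta_mul k l : theta (Kmul k l) = Kmul (theta k) (theta l).
Proof.
have LG_group := lim_group_is_group Gam_group alpha_endo.
have [t [g ->]] := Kcls_surj k; have [s [h ->]] := Kcls_surj l.
rewrite (KmulE alpha_endo (triv_endo_is_endo Gam_group)) !theta_cls.
rewrite (KmulE (lim_endo_is_endo alpha_endo) (triv_endo_is_endo LG_group)).
congr Kcls; apply: functional_extensionality => w.
by rewrite -!theta0_iota theta0_mul.
Qed.

Lemma theta_act f k : theta (actK f k) = actK f (theta k).
Proof.
have [L [g ->]] := Kcls_surj k; case fE: (Vrep f) => [[t s] b].
rewrite (actKE _ _ _ _ fE) !theta_cls (actKE _ _ _ _ fE).
by congr Kcls; apply: functional_extensionality => w; apply: theta0_iota.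
Qed.

End Theta.

Theorem mainTheorem5 (Gam : group_ops) (alpha : Gam -> Gam) :
  is_group Gam -> is_endo alpha ->
  (* the theta_t are compatible with the directed systems *)
  (forall t s : seq word, is_tree t -> is_tree s -> refines s t ->
     forall (g : word -> Gam) w, w \in s ->
       theta0 alpha (iota_tr alpha (triv_endo Gam) t g w) =
       iota_tr (lim_endo alpha) (triv_endo (lim_group alpha)) t
               (fun v => theta0 alpha (g v)) w) /\
  exists theta : K alpha (triv_endo Gam) ->
                 K (lim_endo alpha) (triv_endo (lim_group alpha)),
    [/\ (* theta is induced by the theta_t *)
        forall (t : tree) (g : word -> Gam),
          theta (Kcls alpha (triv_endo Gam) t g) =
          Kcls (lim_endo alpha) (triv_endo (lim_group alpha)) t
               (fun v => theta0 alpha (g v)),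
        (* group isomorphism *)
        bijective theta,
        forall k l, theta (Kmul k l) = Kmul (theta k) (theta l),
        (* V-equivariance *)
        forall f k, isV f -> theta (actK f k) = actK f (theta k) &
        (* unique extension to an isomorphism of the fraction groups *)
        exists Phi : FracT alpha (triv_endo Gam) ->
                     FracT (lim_endo alpha) (triv_endo (lim_group alpha)),
          [/\ frac_iso Phi,
              forall k, Phi (k, id) = (theta k, id),
              forall f, isV f -> Phi (Kone alpha (triv_endo Gam), f) =
                                 (Kone (lim_endo alpha) (triv_endo (lim_group alpha)), f) &
              forall Psi : FracT alpha (triv_endo Gam) ->
                           FracT (lim_endo alpha) (triv_endo (lim_group alpha)),
                frac_iso Psi ->
                (forall k, Psi (k, id) = (theta k, id)) ->
                (forall f, isV f -> Psi (Kone alpha (triv_endo Gam), f) =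
                                   (Kone (lim_endo alpha) (triv_endo (lim_group alpha)), f)) ->
                forall x, in_frac x -> Psi x = Phi x]].
Proof.
move=> Gam_group alpha_endo.
split=> [t s _ _ _ g w _ | ]; first exact: theta0_iota.
have Phi_iso := frac_iso_pair (theta_bij alpha)
  (theta_mul Gam_group alpha_endo) (@theta_act _ alpha).
exists (@theta _ alpha); split.
- exact: theta_cls.
- exact: theta_bij.
- exact: theta_mul Gam_group alpha_endo.
- by move=> f k _; apply: theta_act.
exists (fun x => (theta x.1, x.2)); split=> // [f _ | Psi Psi_iso PsiK PsiV x xV].
  by rewrite /= theta_one.
apply: (frac_iso_unique Gam_group alpha_endo (triv_endo_is_endo Gam_group) Psi_iso Phi_iso) => //.
by move=> f fV; rewrite PsiV // /= theta_one.
Qed.
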